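(* Let $r\ge2$ be an integer, $m$ a positive integer with $r<2^m$, and $c\ge1$ real. If $z$ is selected uniformly at random from $\{0,1,\dots,r-1\}$, then the probability that $d=\gcd(r,z)$ is $cm$-smooth is at least $$1-\frac{1}{c\log_2(cm)}.$$
   Context: A positive integer is $cm$-smooth if it is not divisible by any prime power greater than $cm$. Convention: $\gcd(r,0)=r$. *)

From mathcomp Require Import all_boot all_order all_algebra.
From mathcomp Require Import all_classical all_reals exp.
Set Implicit Arguments. Unset Strict Implicit. Unset Printing Implicit Defensive.
Import Order.TTheory GRing.Theory Num.Theory.
Local Open Scope ring_scope.

Definition log2 {R : realType} (x : R) : R := ln x / ln 2.

Definition smooth {R : realType} (B : R) (d : nat) : Prop :=
  (0 < d)%N /\
  forall p k : nat, prime p -> (0 < k)%N -> (p ^ k %| d)%N -> ((p ^ k)%:R <= B).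

From mathcomp Require Import all_boot all_order all_algebra.
From mathcomp Require Import all_classical all_reals exp.
From mathcomp Require Import ring.
Set Implicit Arguments. Unset Strict Implicit. Unset Printing Implicit Defensive.
Import Order.TTheory GRing.Theory Num.Theory.

(* If gcd(r, z) is not B-smooth, some prime power p^k > B divides both r and z,
   hence so does the least power q_p of p exceeding B.  Only the t primes whose
   full p-part in r exceeds B can occur, each q_p divides at most r / q_p <= r / B
   of the z < r, so at most t r / B values of z are bad.  These t prime parts
   multiply to a divisor of r, so B^t <= r < 2^m, i.e. t <= m / log2 B, and with
   B = cm the proportion of bad z is at most t / B <= 1 / (c log2 (cm)).
   The counting is done over the integers with N = floor B, as p^k > B iff
   p^k > N. *)

Lemma sum_ord_dvdn (q r : nat) : (q %| r)%N -> (\sum_(z < r) (q %| z) = r %/ q)%N.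
Proof.
move=> qr; rewrite divn_count_dvd -(big_mkord xpredT (fun z => nat_of_bool (q %| z))).
apply/eqP; rewrite -(eqn_add2r (q %| r)) -big_nat_recr //= [in X in _ == X]qr.
by rewrite big_ltn //= dvdn0 addnC.
Qed.

Lemma card_ord_has_dvdn (r : nat) (s : seq nat) : all (dvdn^~ r) s ->
  (#|[set z : 'I_r | has (dvdn^~ z) s]| <= \sum_(q <- s) r %/ q)%N.
Proof.
move=> /allP sr; rewrite -sum1_card.
apply: (@leq_trans (\sum_(z < r) \sum_(q <- s) (q %| z))%N).
  rewrite big_mkcond /=; apply: leq_sum => z _; rewrite inE.
  by case: hasP => // -[q qs qz]; rewrite (big_rem q) //= qz.
rewrite exchange_big /= !big_seq; apply: leq_sum => q /sr qr.
by rewrite sum_ord_dvdn.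
Qed.

Definition least_pow_gt (p N : nat) : nat := p ^ (trunc_log p N).+1.

Lemma least_pow_gt_dvdn (p N k : nat) : (1 < p)%N -> (0 < N)%N -> (N < p ^ k)%N ->
  (least_pow_gt p N %| p ^ k)%N.
Proof.
move=> p1 N0 ltNpk; rewrite dvdn_exp2l // -(ltn_exp2l _ _ p1).
exact: leq_ltn_trans (trunc_logP p1 N0) ltNpk.
Qed.

Definition primes_big_part (N r : nat) : seq nat :=
  [seq p <- primes r | (N < p ^ logn p r)%N].

Section BigPrimeParts.
Variables N r : nat.
Hypotheses (N0 : (0 < N)%N) (r0 : (0 < r)%N).
Local Notation P := (primes_big_part N r).

Lemma prime_primes_big_part p : p \in P -> prime p /\ (N < p ^ logn p r)%N.
Proof. by rewrite mem_filter mem_primes => /andP [-> /and3P []]. Qed.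

Lemma least_pow_gt_dvdn_big_part p : p \in P -> (least_pow_gt p N %| r)%N.
Proof.
case/prime_primes_big_part => /prime_gt1 p1 ltN.
exact: dvdn_trans (least_pow_gt_dvdn p1 N0 ltN) (pfactor_dvdnn p r).
Qed.

Lemma has_least_pow_gt_dvdn z p k : prime p -> (0 < k)%N ->
  (p ^ k %| gcdn r z)%N -> (N < p ^ k)%N ->
  has (dvdn^~ z) [seq least_pow_gt q N | q <- P].
Proof.
move=> pp k0; rewrite dvdn_gcd => /andP [pkr pkz] ltN.
have p1 := prime_gt1 pp.
apply/hasP; exists (least_pow_gt p N); last first.
  exact: dvdn_trans (least_pow_gt_dvdn p1 N0 ltN) pkz.
apply: map_f; rewrite mem_filter mem_primes pp r0 /=.
have klog : (k <= logn p r)%N by rewrite -pfactor_dvdn.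
rewrite (leq_trans ltN) ?leq_pexp2l ?(ltnW p1) //=.
by apply: dvdn_trans pkr; rewrite -{1}(expn1 p) dvdn_exp2l.
Qed.

Lemma expn_size_primes_big_part : (N.+1 ^ size P <= r)%N.
Proof.
have partP : (\prod_(p <- P) p ^ logn p r %| r)%N.
  have decomp : (\prod_(p <- primes r) p ^ logn p r = r)%N.
    by rewrite [RHS](prod_prime_decomp r0) prime_decompE big_map.
  rewrite -[X in (_ %| X)%N]decomp big_filter.
  by rewrite [X in (_ %| X)%N](bigID (fun p => N < p ^ logn p r)%N) dvdn_mulr.
apply: leq_trans (dvdn_leq r0 partP).
have -> : (N.+1 ^ size P = \prod_(p <- P) N.+1)%N.
  by rewrite big_const_seq count_predT iter_muln_1.
by rewrite !big_seq; apply: leq_prod => p /prime_primes_big_part [].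
Qed.

End BigPrimeParts.

Lemma card_has_least_pow_gt_dvdn (N r : nat) : (0 < N)%N -> (0 < r)%N ->
  (#|[set z : 'I_r | has (dvdn^~ z) [seq least_pow_gt q N | q <- primes_big_part N r]]|
     <= size (primes_big_part N r) * (r %/ N.+1))%N.
Proof.
move=> N0 r0.
have divr : all (dvdn^~ r) [seq least_pow_gt q N | q <- primes_big_part N r].
  by rewrite all_map; apply/allP => p; exact: least_pow_gt_dvdn_big_part.
apply: leq_trans (card_ord_has_dvdn divr) _.
rewrite big_map -sum1_size big_distrl /= !big_seq leq_sum // => p /prime_primes_big_part [pp _].
by rewrite mul1n leq_div2l // (trunc_log_ltn _ (prime_gt1 pp)).
Qed.

Local Open Scope ring_scope.

Lemma nonsmooth_has_least_pow_gt (R : realType) (B : R) (r : nat) (z : 'I_r) :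
  1 <= B -> ~ smooth B (gcdn r z) ->
  has (dvdn^~ z)
    [seq least_pow_gt q (Num.truncn B) | q <- primes_big_part (Num.truncn B) r].
Proof.
move=> B1 nsm; have r0 : (0 < r)%N by apply: leq_ltn_trans (ltn_ord z).
have [p [k [pp k0 pkd ltB]]] : exists p k,
    [/\ prime p, (0 < k)%N, (p ^ k %| gcdn r z)%N & B < (p ^ k)%:R].
  apply: contra_notP nsm => nex; split; first by rewrite gcdn_gt0 r0.
  move=> p k pp k0 pkd; rewrite leNgt; apply/negP => ltB; apply: nex.
  by exists p, k.
have N0 : (0 < Num.truncn B)%N by rewrite truncn_gt0.
have ltN : (Num.truncn B < p ^ k)%N by rewrite truncn_lt_nat // (le_trans ler01 B1).
exact: (has_least_pow_gt_dvdn N0 r0 pp k0 pkd ltN).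
Qed.

Lemma ler_ln_expn (R : realType) (x y : R) (t m : nat) : 0 < x -> 0 < y ->
  x ^+ t <= y ^+ m -> ln x *+ t <= ln y *+ m.
Proof. by move=> x0 y0; rewrite -!lnXn // ler_ln // posrE exprn_gt0. Qed.

Lemma ler_ratio_divn (R : realFieldType) (B : R) (b t r n : nat) :
  0 < B -> B <= n%:R -> (0 < r)%N -> (b <= t * (r %/ n))%N ->
  b%:R / r%:R <= t%:R / B.
Proof.
move=> B0 Bn r0 hb; rewrite ler_pdivrMr ?ltr0n // mulrAC ler_pdivlMr //.
apply: le_trans (_ : (b * n)%:R <= _); first by rewrite natrM ler_wpM2l.
rewrite -natrM ler_nat; apply: leq_trans (leq_mul hb (leqnn n)) _.
by rewrite -mulnA leq_mul2l leq_divM orbT.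
Qed.

Lemma ler_ratio_inv_log2 (R : realType) (c : R) (m t : nat) :
  1 <= c -> (0 < m)%N -> 1 < c * m%:R -> ln (c * m%:R) *+ t <= ln 2 *+ m ->
  t%:R / (c * m%:R) <= 1 / (c * log2 (c * m%:R)).
Proof.
set B := c * m%:R => c1 m0 B1 lnBt.
have c0 : 0 < c by apply: lt_le_trans c1.
have B0 : 0 < B by apply: lt_trans B1.
have lnB0 : 0 < ln B by rewrite ln_gt0.
have ln20 : 0 < ln (2 : R) by rewrite ln_gt0 ?ltr1n.
rewrite (_ : 1 / (c * log2 B) = m%:R * ln 2 / (ln B * B)); last first.
  by rewrite /log2 /B; field; rewrite ?lt0r_neq0 ?ltr0n.
rewrite (_ : t%:R / B = t%:R * ln B / (ln B * B)); last by field; rewrite ?lt0r_neq0.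
apply: ler_wpM2r; first by rewrite invr_ge0 mulr_ge0 // ltW.
by rewrite !mulr_natl.
Qed.

Theorem lemma9 (R : realType) (r m : nat) (c : R)
  (hr : (2 <= r)%N) (hm : (0 < m)%N) (hrm : (r < 2 ^ m)%N) (hc : 1 <= c) :
  1 - 1 / (c * log2 (c * m%:R)) <=
  (#|[set z : 'I_r | `[< smooth (c * m%:R) (gcdn r z) >] ]|)%:R / r%:R.
Proof.
set B := c * m%:R; set N := Num.truncn B; set t := size (primes_big_part N r).
set good := [set z : 'I_r | _].
have r0 : (0 < r)%N by apply: leq_trans hr.
have m2 : (2 <= m)%N by case: m hm hrm {B N t good} => [|[|m']] // _; rewrite ltnNge hr.
have B2 : 2 <= B by rewrite /B -[2]mul1r ler_pM // ler_nat.
have B1 : 1 <= B by apply: le_trans B2; rewrite ler1n.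
have N0 : (0 < N)%N by rewrite truncn_gt0.
have bad : (#|~: good| <= t * (r %/ N.+1))%N.
  apply: leq_trans (card_has_least_pow_gt_dvdn N0 r0).
  apply: subset_leq_card; apply/fintype.subsetP => z; rewrite !inE => /asboolPn.
  exact: nonsmooth_has_least_pow_gt.
have BN : B <= N.+1%:R by apply/ltW/truncnS_gt.
have lnBt : ln B *+ t <= ln 2 *+ m.
  apply: ler_ln_expn; rewrite ?(lt_le_trans ltr01 B1) //.
  apply: le_trans (lerXn2r t _ _ BN) _; rewrite ?nnegrE ?(le_trans ler01 B1) //.
  by rewrite -!natrX ler_nat (leq_trans (expn_size_primes_big_part _ r0) (ltnW hrm)).
have badr : (#|~: good| <= r)%N by rewrite -[X in (_ <= X)%N](card_ord r) max_card.
rewrite cardsCs card_ord natrB // mulrBl divff ?pnatr_eq0 -?lt0n // lerD2l lerN2.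
apply: le_trans (ler_ratio_divn _ BN r0 bad) (ler_ratio_inv_log2 hc hm _ lnBt).
  exact: lt_le_trans B1.
by apply: lt_le_trans B2; rewrite ltr1n.
Qed.
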